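(* For $\alpha\in H_R'$ let $\theta_\alpha:=\phi_{B_++\delta\alpha}\colon H_R\to H_R$. Then: (1) For every forest $w$, $\theta_\alpha(w)-w\in\bigoplus_{n=0}^{|w|-1}H_{R,n}$. (2) Each $\theta_\alpha$ is a Hopf algebra automorphism of $H_R$, with inverse $\theta_\alpha^{-1}=\theta_{-\alpha\circ\theta_\alpha}$, and for all $\alpha,\beta\in H_R'$, $\theta_\alpha\circ\theta_\beta=\theta_\gamma$ with $\gamma=\alpha+\beta\circ\theta_\alpha^{-1}$. (3) The maps $\delta\colon H_R'\to\operatorname{End}(H_R)$ and $\alpha\mapsto\theta_\alpha$ are injective. Hence $\alpha\bullet\beta:=\alpha+\beta\circ\theta_\alpha^{-1}$ defines a group structure on $H_R'$ with neutral element $0$ and inverse $\alpha^{\bullet-1}=-\alpha\circ\theta_\alpha$, such that $\alpha\mapsto\theta_\alpha$ is a group isomorphism onto its image in $\operatorname{Aut}_{\mathrm{Hopf}}(H_R)$.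
   Context: $H_R$ is the Connes–Kreimer Hopf algebra of rooted trees over a field $\mathbb K$ of characteristic zero: free commutative algebra on rooted trees, basis rooted forests, $H_{R,n}$ the span of forests with $n$ nodes, $|w|$ the number of nodes; $B_+$ grafts all trees of a forest onto a new root; coproduct with $\Delta\circ B_+=B_+\otimes\mathbb 1+(\mathrm{id}\otimes B_+)\circ\Delta$. $H_R'=\operatorname{Hom}(H_R,\mathbb K)$; for $\alpha\in H_R'$, $\delta\alpha:=(\mathrm{id}\otimes\alpha)\circ\Delta-\mathbb 1\cdot\alpha$. For $M\in\operatorname{End}(H_R)$, $\phi_M$ is the unique unital algebra morphism $H_R\to H_R$ with $\phi_M\circ B_+=M\circ\phi_M$. *)

(* Connes--Kreimer Hopf algebra of rooted trees, written out
   concretely: H_R has basis the (isomorphism classes of) rooted forests,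
   represented in canonical form; elements of H_R are formal linear
   combinations compared coefficientwise; linear maps H_R -> H_R are given by
   their values on the basis; H_R' = all functions forest -> K. *)
From HB Require Import structures.
From mathcomp Require Import all_boot all_order all_algebra.
Set Implicit Arguments. Unset Strict Implicit. Unset Printing Implicit Defensive.
Import GRing.Theory.
Local Open Scope ring_scope.

Inductive rtree := RNode of seq rtree.

Fixpoint enc (t : rtree) : GenTree.tree unit :=
  let: RNode s := t in GenTree.Node 0 (map enc s).
Fixpoint dec (g : GenTree.tree unit) : rtree :=
  match g with GenTree.Leaf _ => RNode [::] | GenTree.Node _ l => RNode (map dec l) end.
Fixpoint encK_aux (t : rtree) : dec (enc t) = t :=
  match t as t0 return dec (enc t0) = t0 with
  | RNode s => f_equal RNode
      ((fix F (l : seq rtree) : map dec (map enc l) = l :=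
          match l with
          | [::] => erefl
          | t' :: l' => f_equal2 cons (encK_aux t') (F l')
          end) s)
  end.
Lemma encK : cancel enc dec. Proof. exact: encK_aux. Qed.
HB.instance Definition _ := Countable.copy rtree (can_type encK).

Lemma rtree_ind2 (P : rtree -> Prop) :
  (forall s, (forall t, t \in s -> P t) -> P (RNode s)) -> forall t, P t.
Proof.
move=> H; fix IH 1; move=> [s]; apply: H.
move: s; fix IHs 1; move=> [|a s] t.
  clear IH IHs; by rewrite in_nil.
rewrite in_cons => /orP[/eqP-> | ts].
  exact: (IH a).
exact: (IHs s t ts).
Qed.

Definition tle (a b : rtree) : bool := (pickle a <= pickle b)%N.
Lemma tle_total : total tle. Proof. by move=> a b; apply: leq_total. Qed.
Lemma tle_trans : transitive tle. Proof. by move=> a b c; apply: leq_trans. Qed.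

(** Canonical representative of the isomorphism class of a rooted tree
    (children recursively canonicalised and sorted), and of a forest. *)
Fixpoint canon (t : rtree) : rtree :=
  let: RNode s := t in RNode (sort tle (map canon s)).
Definition canonF (s : seq rtree) : seq rtree := sort tle (map canon s).

Lemma canonF_idem_in (s : seq rtree) :
  (forall t, t \in s -> canon (canon t) = canon t) -> canonF (canonF s) = canonF s.
Proof.
move=> H; rewrite /canonF.
have -> : map canon (sort tle (map canon s)) = sort tle (map canon s).
  apply: map_id_in => x; rewrite mem_sort => /mapP[y ys ->]; exact: H.
apply: sorted_sort; first exact: tle_trans.
exact: sort_sorted tle_total _.
Qed.
Lemma canonK (t : rtree) : canon (canon t) = canon t.
Proof.
elim/rtree_ind2: t => s IH /=. by congr RNode; apply: canonF_idem_in.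
Qed.
Lemma canonF_idem (s : seq rtree) : canonF (canonF s) == canonF s.
Proof. by apply/eqP/canonF_idem_in => t _; exact: canonK. Qed.

(** Rooted forests = isomorphism classes of finite multisets of rooted trees,
    represented by their canonical form. The empty forest is the unit 1. *)
Record forest := Forest { fval :> seq rtree; _ : canonF fval == fval }.
HB.instance Definition _ := [isSub for fval].
HB.instance Definition _ := [Countable of forest by <:].

Definition mkF (s : seq rtree) : forest := @Forest (canonF s) (canonF_idem s).
Definition F0 : forest := mkF [::].
Definition fmul (u v : forest) : forest := mkF (fval u ++ fval v).
Definition Bp (w : forest) : forest := mkF [:: RNode (fval w)].

Fixpoint tsize (t : rtree) : nat := let: RNode s := t in (sumn (map tsize s)).+1.
Definition fsize (w : forest) : nat := sumn (map tsize (fval w)).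

Section HR.
Variable K : fieldType.

Definition vec := seq (K * forest).
Definition coef (v : vec) (w : forest) : K := \sum_(p <- v | p.2 == w) p.1.
Definition veq (v1 v2 : vec) : Prop := forall w, coef v1 w = coef v2 w.
Definition fbasis (w : forest) : vec := [:: (1, w)].
Definition vone : vec := fbasis F0.
Definition vscale (c : K) (v : vec) : vec := [seq (c * p.1, p.2) | p <- v].
Definition vmul (v1 v2 : vec) : vec :=
  [seq (p.1 * q.1, fmul p.2 q.2) | p <- v1, q <- v2].

Definition endo := forest -> vec.
Definition lin (f : endo) (v : vec) : vec := flatten [seq vscale p.1 (f p.2) | p <- v].
Definition eeq (f g : endo) : Prop := forall w, veq (f w) (g w).
Definition ecomp (f g : endo) : endo := fun w => lin f (g w).
Definition eid : endo := fbasis.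
Definition eadd (f g : endo) : endo := fun w => f w ++ g w.
Definition eBp : endo := fun w => fbasis (Bp w).

Definition dual := forest -> K.
Definition ev (a : dual) (v : vec) : K := \sum_(p <- v) p.1 * a p.2.
Definition dcomp (a : dual) (f : endo) : dual := fun w => ev a (f w).
Definition dopp (a : dual) : dual := fun w => - a w.
Definition dzero : dual := fun _ => 0.

Definition vec2 := seq (K * (forest * forest)).
Definition coef2 (x : vec2) (uv : forest * forest) : K := \sum_(p <- x | p.2 == uv) p.1.
Definition veq2 (x y : vec2) : Prop := forall uv, coef2 x uv = coef2 y uv.
Definition vone2 : vec2 := [:: (1, (F0, F0))].
Definition vmul2 (x y : vec2) : vec2 :=
  [seq (p.1 * q.1, (fmul p.2.1 q.2.1, fmul p.2.2 q.2.2)) | p <- x, q <- y].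
Definition tmap (f g : endo) (x : vec2) : vec2 :=
  flatten [seq [seq (p.1 * a.1 * b.1, (a.2, b.2)) | a <- f p.2.1, b <- g p.2.2] | p <- x].
Definition vmulT (x : vec2) : vec := [seq (p.1, fmul p.2.1 p.2.2) | p <- x].

(** Coproduct: multiplicative, with Delta (B_+ w) = B_+ w (x) 1 + (id (x) B_+) Delta w. *)
Fixpoint DeltaT (t : rtree) : vec2 :=
  let: RNode s := t in
  (1, (Bp (mkF s), F0)) ::
  [seq (p.1, (p.2.1, Bp p.2.2)) |
     p <- (fix go (l : seq rtree) : vec2 :=
             match l with [::] => vone2 | t' :: l' => vmul2 (DeltaT t') (go l') end) s].
Definition Delta (w : forest) : vec2 := foldr (fun t acc => vmul2 (DeltaT t) acc) vone2 (fval w).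
Definition Delta_lin (v : vec) : vec2 :=
  flatten [seq [seq (p.1 * q.1, q.2) | q <- Delta p.2] | p <- v].
Definition eps : dual := fun w => (w == F0)%:R.

(** delta alpha := (id (x) alpha) o Delta - 1 . alpha *)
Definition delta (a : dual) : endo :=
  fun w => [seq (p.1 * a p.2.2, p.2.1) | p <- Delta w] ++ [:: (- a w, F0)].

(** phi_M: the unital algebra morphism with phi_M o B_+ = M o phi_M. *)
Fixpoint phiT (M : endo) (t : rtree) : vec :=
  let: RNode s := t in
  lin M ((fix go (l : seq rtree) : vec :=
            match l with [::] => vone | t' :: l' => vmul (phiT M t') (go l') end) s).
Definition phi (M : endo) : endo :=
  fun w => foldr (fun t acc => vmul (phiT M t) acc) vone (fval w).

Definition theta (a : dual) : endo := phi (eadd eBp (delta a)).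

Definition alg_morph (f : endo) : Prop :=
  veq (f F0) vone /\ forall u v, veq (f (fmul u v)) (vmul (f u) (f v)).
Definition coalg_morph (f : endo) : Prop :=
  forall w, veq2 (Delta_lin (f w)) (tmap f f (Delta w)) /\ ev eps (f w) = eps w.
Definition is_antipode (S : endo) : Prop :=
  forall w, veq (vmulT (tmap S eid (Delta w))) (vscale (eps w) vone)
         /\ veq (vmulT (tmap eid S (Delta w))) (vscale (eps w) vone).
Definition hopf_morph (f : endo) : Prop :=
  [/\ alg_morph f, coalg_morph f & forall S, is_antipode S -> eeq (ecomp f S) (ecomp S f)].
Definition hopf_aut (f : endo) : Prop :=
  hopf_morph f /\ exists g : endo, eeq (ecomp f g) eid /\ eeq (ecomp g f) eid.

Definition ginv (a : dual) : dual := dopp (dcomp a (theta a)).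
Definition bullet (a b : dual) : dual := fun w => a w + dcomp b (theta (ginv a)) w.

End HR.

(* Elements of H_R and H_R (x) H_R are finite formal sums, equal iff all
   linear functionals agree on them, so every identity is proved "in evaluated
   form", after pairing with an arbitrary functional.  Since
   M_a = B_+ + delta a is a Hochschild 1-cocycle, theta_a is a bialgebra
   endomorphism; it is unitriangular for the grading (part 1).  The identity
   delta(g) o f = f o delta(g o f) for bialgebra morphisms f yields, by
   uniqueness, the inverse and composition laws; uniqueness of convolution
   inverses gives compatibility with antipodes (part 2).  Reading off the
   coefficients of dot (x) _ in Delta shows delta, hence theta, injective in
   characteristic zero, and the group laws for bullet follow (part 3). *)

From Pilot Require Import Defs.
From HB Require Import structures.
From mathcomp Require Import all_boot all_order all_algebra ring zify.
From Stdlib Require Import FunctionalExtensionality.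
Set Implicit Arguments. Unset Strict Implicit. Unset Printing Implicit Defensive.
Import GRing.Theory.
Local Open Scope ring_scope.

(** * Formal sums and their pairings with functionals *)

Section FormalSums.
Variables (K : fieldType) (T : eqType).
Implicit Types (x y : seq (K * T)) (a b : T -> K).

Definition gev a x : K := \sum_(p <- x) p.1 * a p.2.

Lemma gev_nil a : gev a [::] = 0. Proof. by rewrite /gev big_nil. Qed.
Lemma gev_cons a p x : gev a (p :: x) = p.1 * a p.2 + gev a x.
Proof. by rewrite /gev big_cons. Qed.
Lemma gev_cat a x y : gev a (x ++ y) = gev a x + gev a y.
Proof. by rewrite /gev big_cat. Qed.
Lemma gev1 a t : gev a [:: (1, t)] = a t.
Proof. by rewrite gev_cons gev_nil addr0 mul1r. Qed.
Lemma eq_gev a b x : a =1 b -> gev a x = gev b x.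
Proof. by move=> e; apply: eq_bigr => p _; rewrite e. Qed.

Lemma gev_add a b x : gev (fun t => a t + b t) x = gev a x + gev b x.
Proof. by rewrite /gev -big_split; apply: eq_bigr => p _; rewrite mulrDr. Qed.
Lemma gev_opp a x : gev (fun t => - a t) x = - gev a x.
Proof. by rewrite /gev -sumrN; apply: eq_bigr => p _; rewrite mulrN. Qed.
Lemma gev_sub a b x : gev (fun t => a t - b t) x = gev a x - gev b x.
Proof. by rewrite gev_add gev_opp. Qed.
Lemma gev_scale c a x : gev (fun t => c * a t) x = c * gev a x.
Proof. by rewrite /gev big_distrr; apply: eq_bigr => p _; rewrite mulrCA. Qed.
Lemma gev_scaler c a x : gev (fun t => a t * c) x = gev a x * c.
Proof. by rewrite /gev big_distrl; apply: eq_bigr => p _; rewrite mulrA. Qed.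
Lemma gev0 x : gev (fun _ => 0) x = 0.
Proof. by rewrite /gev big1 // => p _; rewrite mulr0. Qed.

Definition gcoef x t := \sum_(p <- x | p.2 == t) p.1.
Lemma gcoefE x t : gcoef x t = gev (fun u => (u == t)%:R) x.
Proof.
rewrite /gcoef /gev big_mkcond; apply: eq_bigr => p _.
by case: (p.2 == t); rewrite ?mulr1 ?mulr0.
Qed.

Lemma gev_coef a x s : uniq s -> {subset map snd x <= s} ->
  gev a x = \sum_(t <- s) gcoef x t * a t.
Proof.
move=> us; elim: x => [|p x IH] sub.
  by rewrite gev_nil big1 // => t _; rewrite /gcoef big_nil mul0r.
rewrite gev_cons IH; last by move=> t tx; apply: sub; rewrite /= in_cons tx orbT.
have ps : p.2 \in s by apply: sub; rewrite /= in_cons eqxx.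
rewrite /gcoef [RHS](eq_bigr (fun t => (if p.2 == t then p.1 * a t else 0) +
   (\sum_(p0 <- x | p0.2 == t) p0.1) * a t)); last first.
  by move=> t _; rewrite big_cons; case: (p.2 == t); rewrite ?mulrDl ?add0r ?mul0r.
rewrite big_split /=; congr (_ + _).
by rewrite (bigD1_seq p.2) //= eqxx big1 ?addr0 // => t; rewrite eq_sym => /negbTE ->.
Qed.

Lemma gcoef_gevP x y : (forall t, gcoef x t = gcoef y t) <-> (forall a, gev a x = gev a y).
Proof.
split=> [e a|e t]; last by rewrite !gcoefE e.
pose s := undup (map snd (x ++ y)).
rewrite (@gev_coef a x s) ?(@gev_coef a y s) ?undup_uniq //.
- by apply: eq_bigr => t _; rewrite e.
- by move=> t ty; rewrite mem_undup map_cat mem_cat ty orbT.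
- by move=> t tx; rewrite mem_undup map_cat mem_cat tx.
Qed.

Variable mulT : T -> T -> T.
Definition gmul x y := [seq (p.1 * q.1, mulT p.2 q.2) | p <- x, q <- y].
Lemma gev_gmul a x y : gev a (gmul x y) = gev (fun t => gev (fun u => a (mulT t u)) y) x.
Proof.
rewrite /gev /gmul big_allpairs_dep; apply: eq_bigr => p _.
by rewrite big_distrr; apply: eq_bigr => q _ /=; rewrite mulrA.
Qed.
End FormalSums.

Lemma gev_exch (K : fieldType) (T U : eqType) (F : T -> U -> K)
    (x : seq (K * T)) (z : seq (K * U)) :
  gev (fun t => gev (fun u => F t u) z) x = gev (fun u => gev (fun t => F t u) x) z.
Proof.
rewrite /gev; under eq_bigr => p _ do rewrite big_distrr.
rewrite exchange_big /=; apply: eq_bigr => q _; rewrite big_distrr /=.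
by apply: eq_bigr => p _; rewrite mulrCA.
Qed.

Section FormalProducts.
Variables (K : fieldType) (T : eqType) (mulT : T -> T -> T) (e : T).
Hypothesis mulTC : commutative mulT.
Hypothesis mulTA : associative mulT.
Hypothesis mul1T : left_id e mulT.
Implicit Types (x y z : seq (K * T)) (a b : T -> K).

Definition gprod (g : rtree -> seq (K * T)) l :=
  foldr (fun t acc => gmul mulT (g t) acc) [:: (1, e)] l.

Lemma gev_gmul1 a y : gev a (gmul mulT [:: (1, e)] y) = gev a y.
Proof. by rewrite gev_gmul gev1; apply: eq_gev => u; rewrite mul1T. Qed.
Lemma gev_gmulC a x y : gev a (gmul mulT x y) = gev a (gmul mulT y x).
Proof. by rewrite !gev_gmul gev_exch; apply: eq_gev => u; apply: eq_gev => t; rewrite mulTC. Qed.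
Lemma gev_gmulA a x y z :
  gev a (gmul mulT x (gmul mulT y z)) = gev a (gmul mulT (gmul mulT x y) z).
Proof.
rewrite !gev_gmul; apply: eq_gev => t; rewrite gev_gmul.
by apply: eq_gev => u; apply: eq_gev => v; rewrite mulTA.
Qed.
Lemma gev_gmull a x x' y : (forall b, gev b x = gev b x') ->
  gev a (gmul mulT x y) = gev a (gmul mulT x' y).
Proof. by move=> h; rewrite !gev_gmul h. Qed.
Lemma gev_gmulr a x y y' : (forall b, gev b y = gev b y') ->
  gev a (gmul mulT x y) = gev a (gmul mulT x y').
Proof. by move=> h; rewrite !gev_gmul; apply: eq_gev => t; rewrite h. Qed.

Lemma gprod_cat g l1 l2 a :
  gev a (gprod g (l1 ++ l2)) = gev a (gmul mulT (gprod g l1) (gprod g l2)).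
Proof.
elim: l1 a => [|t l1 IH] a /=; first by rewrite gev_gmul1.
by rewrite -gev_gmulA; apply: gev_gmulr => b; exact: IH.
Qed.

Lemma gprod_perm g l l' a : perm_eq l l' -> gev a (gprod g l) = gev a (gprod g l').
Proof.
move=> p; move: a.
have := @catCA_perm_ind _ (fun s => forall a, gev a (gprod g s) = gev a (gprod g l')).
move=> /(_ _ l' l); rewrite perm_sym p; apply=> // s1 s2 s3 h a.
rewrite -h gprod_cat [RHS]gprod_cat.
rewrite (@gev_gmulr _ _ _ (gmul mulT (gprod g s1) (gprod g s3))); last first.
  by move=> b; exact: gprod_cat.
rewrite [RHS](@gev_gmulr _ _ _ (gmul mulT (gprod g s2) (gprod g s3))); last first.
  by move=> b; exact: gprod_cat.
by rewrite !gev_gmulA; apply: gev_gmull => b; exact: gev_gmulC.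
Qed.
End FormalProducts.

(** * Forests form a free commutative monoid *)

Lemma tle_anti : antisymmetric tle.
Proof.
move=> a b /andP[h1 h2]; apply: (pcan_inj pickleK).
by apply/eqP; rewrite eqn_leq; apply/andP.
Qed.

Lemma canonF_forest (w : forest) : canonF w = w.
Proof. by case: w => s /= /eqP. Qed.
Lemma canon_in (w : forest) t : t \in fval w -> canon t = t.
Proof. by rewrite -canonF_forest /canonF mem_sort => /mapP[t' _ ->]; exact: canonK. Qed.
Lemma map_canon (w : forest) : map canon (fval w) = fval w.
Proof. by apply: map_id_in => t; apply: canon_in. Qed.
Lemma fval_mkF s : perm_eq (fval (mkF s)) (map canon s).
Proof. by rewrite /= /canonF perm_sort. Qed.
Lemma mkF_forest (w : forest) : mkF (fval w) = w.
Proof. by apply: val_inj => /=; rewrite canonF_forest. Qed.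

Lemma forest_eq (u v : forest) : perm_eq (fval u) (fval v) -> u = v.
Proof.
move=> p; rewrite -(mkF_forest u) -(mkF_forest v); apply: val_inj => /=.
by apply/perm_sortP; rewrite ?map_canon //; [exact: tle_total|exact: tle_trans|exact: tle_anti].
Qed.

Lemma fval_fmul u v : perm_eq (fval (fmul u v)) (fval u ++ fval v).
Proof. by rewrite (permPl (fval_mkF _)) map_cat !map_canon. Qed.
Lemma fmulC : commutative fmul.
Proof.
move=> u v; apply: forest_eq.
by rewrite (permPl (fval_fmul _ _)) (permPr (fval_fmul _ _)) perm_catC.
Qed.
Lemma fmulA : associative fmul.
Proof.
move=> u v w; apply: forest_eq; rewrite (permPl (fval_fmul _ _)) (permPr (fval_fmul _ _)).
apply: (@perm_trans _ (fval u ++ (fval v ++ fval w))); first by rewrite perm_cat2l fval_fmul.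
by rewrite catA perm_cat2r perm_sym fval_fmul.
Qed.
Lemma fmul0f : left_id F0 fmul.
Proof. by move=> u; apply: forest_eq; rewrite (permPl (fval_fmul _ _)). Qed.
Lemma fmulf0 : right_id F0 fmul.
Proof. by move=> u; rewrite fmulC fmul0f. Qed.
Lemma fmulI u v v' : fmul u v = fmul u v' -> v = v'.
Proof.
move=> e; apply: forest_eq; rewrite -(perm_cat2l (fval u)).
by rewrite -(permPl (fval_fmul _ _)) e fval_fmul.
Qed.
Lemma forest0 (w : forest) : fval w = [::] -> w = F0.
Proof. by move=> e; apply: forest_eq; rewrite e. Qed.

Lemma fval_Bp w : fval (Bp w) = [:: RNode (fval w)].
Proof. by rewrite /= /canonF /= -/(canonF w) canonF_forest. Qed.
Lemma Bp_inj : injective Bp.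
Proof. by move=> u v e; apply: val_inj; move: (congr1 fval e); rewrite !fval_Bp => -[]. Qed.

Lemma fsize_fmul u v : fsize (fmul u v) = (fsize u + fsize v)%N.
Proof. by rewrite /fsize (perm_sumn (perm_map _ (fval_fmul _ _))) map_cat sumn_cat. Qed.
Lemma fsize_F0 : fsize F0 = 0%N. Proof. by []. Qed.
Lemma fsize_Bp w : fsize (Bp w) = (fsize w).+1.
Proof. by rewrite /fsize fval_Bp /= addn0. Qed.
Lemma fsize0 w : fsize w = 0%N -> w = F0.
Proof.
case: w => [[|t s] h] e; first exact: val_inj.
by move: e; rewrite /fsize /=; case: t h => cs h; rewrite addSn.
Qed.

Lemma forest_decomp (w : forest) t r : fval w = t :: r ->
  exists c r' : forest, w = fmul (Bp c) r' /\ fval r' = r.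
Proof.
move=> ew; case: t ew => cs ew.
have ct : canon (RNode cs) = RNode cs by apply: (canon_in (w := w)); rewrite ew mem_head.
have hc : canonF cs == cs by apply/eqP; case: ct.
have sw : sorted tle (fval w) by rewrite -canonF_forest; apply: sort_sorted; exact: tle_total.
have hr : canonF r == r.
  apply/eqP; rewrite /canonF (@map_id_in _ canon r).
    by apply: sorted_sort; [exact: tle_trans | move: sw; rewrite ew => /path_sorted].
  by move=> x xr; apply: (canon_in (w := w)); rewrite ew in_cons xr orbT.
exists (Forest hc), (Forest hr); split=> //.
by apply: forest_eq; rewrite perm_sym (permPl (fval_fmul _ _)) fval_Bp ew.
Qed.

Lemma forest_ind (P : forest -> Prop) :
  P F0 -> (forall c r, P c -> P r -> P (fmul (Bp c) r)) -> forall w, P w.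
Proof.
move=> P0 PS w; move: {2}(fsize w) (leqnn (fsize w)) => n.
elim: n w => [|n IH] w hs.
  by move: hs; rewrite leqn0 => /eqP/fsize0 ->.
case ew: (fval w) => [|t r]; first by rewrite (forest0 ew).
have [c [r' [ew' _]]] := forest_decomp ew.
move: hs; rewrite ew' fsize_fmul fsize_Bp addSn ltnS => hs.
by apply: PS; apply: IH; apply: leq_trans hs; [exact: leq_addr | exact: leq_addl].
Qed.

Section Evaluation.
Variable K : fieldType.
Implicit Types (b : forest -> forest -> K) (x y : vec K) (a c : dual K) (f g : endo K)
  (X Y : vec2 K).

Definition fmul2 (p q : forest * forest) := (fmul p.1 q.1, fmul p.2 q.2).
Definition ev2 b X := gev (fun uv => b uv.1 uv.2) X.

Lemma ev_cat a x y : ev a (x ++ y) = ev a x + ev a y. Proof. exact: gev_cat. Qed.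
Lemma ev_fbasis a w : ev a (fbasis K w) = a w. Proof. exact: gev1. Qed.
Lemma ev_vone a : ev a (vone K) = a F0. Proof. exact: gev1. Qed.
Lemma eq_ev a c x : a =1 c -> ev a x = ev c x. Proof. exact: eq_gev. Qed.
Lemma ev_add a c x : ev (fun t => a t + c t) x = ev a x + ev c x. Proof. exact: gev_add. Qed.
Lemma ev_sub a c x : ev (fun t => a t - c t) x = ev a x - ev c x. Proof. exact: gev_sub. Qed.
Lemma ev_opp a x : ev (fun t => - a t) x = - ev a x. Proof. exact: gev_opp. Qed.
Lemma ev_scale k a x : ev (fun t => k * a t) x = k * ev a x. Proof. exact: gev_scale. Qed.
Lemma ev_scaler k a x : ev (fun t => a t * k) x = ev a x * k. Proof. exact: gev_scaler. Qed.
Lemma ev0 x : ev (fun _ => 0) x = 0. Proof. exact: gev0. Qed.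
Lemma ev_exch (F : forest -> forest -> K) x y :
  ev (fun u => ev (fun v => F u v) y) x = ev (fun v => ev (fun u => F u v) x) y.
Proof. exact: gev_exch. Qed.
Lemma veqP x y : veq x y <-> forall a, ev a x = ev a y.
Proof. exact: gcoef_gevP. Qed.

Lemma ev_vscale a k x : ev a (vscale k x) = k * ev a x.
Proof. by rewrite /ev /vscale big_map big_distrr; apply: eq_bigr => p _ /=; rewrite mulrA. Qed.
Lemma ev_lin a f x : ev a (lin f x) = ev (fun w => ev a (f w)) x.
Proof. by rewrite /lin /ev big_flatten big_map; apply: eq_bigr => p _; exact: ev_vscale. Qed.
Lemma lin_eq f x y : (forall c, ev c x = ev c y) -> forall c, ev c (lin f x) = ev c (lin f y).
Proof. by move=> h c; rewrite !ev_lin h. Qed.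
Lemma ev_vmul a x y : ev a (vmul x y) = ev (fun u => ev (fun w => a (fmul u w)) y) x.
Proof. exact: gev_gmul. Qed.

Lemma ev2_cons b p X : ev2 b (p :: X) = p.1 * b p.2.1 p.2.2 + ev2 b X. Proof. exact: gev_cons. Qed.
Lemma eq_ev2 b b' X : (forall u v, b u v = b' u v) -> ev2 b X = ev2 b' X.
Proof. by move=> h; apply: eq_gev => p; rewrite h. Qed.
Lemma ev2_add b b' X : ev2 (fun u v => b u v + b' u v) X = ev2 b X + ev2 b' X.
Proof. exact: (gev_add (fun uv => b uv.1 uv.2)). Qed.
Lemma ev2_sub b b' X : ev2 (fun u v => b u v - b' u v) X = ev2 b X - ev2 b' X.
Proof. exact: (gev_sub (fun uv => b uv.1 uv.2)). Qed.
Lemma ev2_opp b X : ev2 (fun u v => - b u v) X = - ev2 b X.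
Proof. exact: (gev_opp (fun uv => b uv.1 uv.2)). Qed.
Lemma ev2_scale k b X : ev2 (fun u v => k * b u v) X = k * ev2 b X.
Proof. exact: (gev_scale k (fun uv => b uv.1 uv.2)). Qed.
Lemma ev2_0 X : ev2 (fun _ _ => 0) X = 0. Proof. exact: gev0. Qed.
Lemma ev2_exch (F : forest -> forest -> forest -> forest -> K) X Y :
  ev2 (fun u1 u2 => ev2 (fun v1 v2 => F u1 u2 v1 v2) Y) X =
  ev2 (fun v1 v2 => ev2 (fun u1 u2 => F u1 u2 v1 v2) X) Y.
Proof. exact: (gev_exch (fun p q => F p.1 p.2 q.1 q.2)). Qed.
Lemma ev_ev2_exch (F : forest -> forest -> forest -> K) X x :
  ev2 (fun u1 u2 => ev (fun v => F u1 u2 v) x) X =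
  ev (fun v => ev2 (fun u1 u2 => F u1 u2 v) X) x.
Proof. exact: (gev_exch (fun p q => F p.1 p.2 q)). Qed.
Lemma veq2P X Y : veq2 X Y <-> forall b, ev2 b X = ev2 b Y.
Proof.
rewrite /veq2 /coef2; split=> [/gcoef_gevP h b|h]; first exact: h.
apply/gcoef_gevP => a; have := h (fun u w => a (u, w)); rewrite /ev2.
by rewrite (@eq_gev _ _ _ a) ?[in X in _ = X -> _](@eq_gev _ _ _ a) // => -[].
Qed.

Lemma ev2_vone2 b : ev2 b (vone2 K) = b F0 F0. Proof. exact: gev1. Qed.
Lemma ev2_vmul2 b X Y :
  ev2 b (vmul2 X Y) = ev2 (fun u1 u2 => ev2 (fun v1 v2 => b (fmul u1 v1) (fmul u2 v2)) Y) X.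
Proof. exact: (@gev_gmul _ _ fmul2). Qed.
Lemma ev2_tmap b f g X :
  ev2 b (tmap f g X) = ev2 (fun u w => ev (fun u' => ev (fun v' => b u' v') (g w)) (f u)) X.
Proof.
rewrite /ev2 /tmap /gev big_flatten big_map; apply: eq_bigr => p _.
rewrite big_allpairs_dep /= big_distrr; apply: eq_bigr => q _.
by rewrite /ev /gev big_distrr big_distrr; apply: eq_bigr => r _ /=; rewrite !mulrA.
Qed.
Lemma ev_vmulT a X : ev a (vmulT X) = ev2 (fun u w => a (fmul u w)) X.
Proof. by rewrite /ev /vmulT big_map. Qed.
Lemma ev2_Delta_lin b x : ev2 b (Delta_lin x) = ev (fun w => ev2 b (Delta K w)) x.
Proof.
rewrite /ev2 /Delta_lin /gev big_flatten big_map; apply: eq_bigr => p _.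
by rewrite big_map big_distrr; apply: eq_bigr => q _ /=; rewrite mulrA.
Qed.
Lemma ev_delta c a w : ev c (delta a w) = ev2 (fun p q => c p * a q) (Delta K w) - a w * c F0.
Proof.
rewrite /delta ev_cat /ev big_cons big_nil addr0 big_map mulNr; congr (_ - _).
by apply: eq_bigr => p _ /=; rewrite mulrAC mulrA.
Qed.
End Evaluation.

(** * The universal property of H_R *)

Section UniversalProperty.
Variable K : fieldType.
Implicit Types (a : dual K) (f g M : endo K).

Definition multiplicative f := (forall a, ev a (f F0) = a F0) /\
  forall u w a, ev a (f (fmul u w)) = ev a (vmul (f u) (f w)).
Definition intertwines f M := forall w a, ev a (f (Bp w)) = ev a (lin M (f w)).

Lemma phiT_node M s :
  phiT M (RNode s) = lin M (foldr (fun t acc => vmul (phiT M t) acc) (vone K) s).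
Proof. by rewrite /=; congr lin; elim: s => //= t s ->. Qed.

Lemma phi_multiplicative M : multiplicative (phi M).
Proof.
split=> [a|u w a]; first exact: ev_vone.
have phiE z : phi M z = gprod fmul F0 (phiT M) (fval z) by [].
rewrite !phiE; apply: etrans (gprod_perm fmulC fmulA fmul0f _ _ (fval_fmul u w)) _.
exact: (gprod_cat fmulA fmul0f).
Qed.

Lemma phi_intertwines M : intertwines (phi M) M.
Proof.
move=> w a; rewrite /phi fval_Bp /= ev_vmul -/(phiT M (RNode (fval w))) phiT_node.
by apply: eq_ev => u; rewrite ev_vone fmulf0.
Qed.

Lemma intertwiner_unique f g M : multiplicative f -> multiplicative g ->
  intertwines f M -> intertwines g M -> forall w a, ev a (f w) = ev a (g w).
Proof.
move=> [f0 fm] [g0 gm] fB gB; elim/forest_ind => [|c r IHc IHr] a.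
  by rewrite f0 g0.
rewrite fm gm !ev_vmul fB gB !ev_lin IHc; apply: eq_ev => w.
by apply: eq_ev => u; rewrite IHr.
Qed.

Lemma multiplicative_eid : multiplicative (eid K).
Proof. by split=> [a|u w a]; rewrite /eid ?ev_vmul !ev_fbasis // ev_fbasis. Qed.
Lemma intertwines_eid : intertwines (eid K) (eBp K).
Proof. by move=> w a; rewrite /eid ev_lin !ev_fbasis. Qed.

Lemma multiplicative_comp f g : multiplicative f -> multiplicative g ->
  multiplicative (ecomp f g).
Proof.
move=> [f0 fm] [g0 gm]; split=> [a|u w a]; rewrite /ecomp ev_lin.
  by rewrite g0 f0.
rewrite gm !ev_vmul (ev_lin (fun u => ev (fun w => a (fmul u w)) (lin f (g w)))).
apply: eq_ev => s.
rewrite [RHS](eq_ev (c := fun p => ev (fun t => ev (fun q => a (fmul p q)) (f t)) (g w))).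
  by rewrite ev_exch; apply: eq_ev => t; rewrite fm ev_vmul.
by move=> p; rewrite ev_lin.
Qed.

Lemma intertwines_comp f g Mg M' : intertwines g Mg ->
  (forall z c, ev c (lin f (Mg z)) = ev c (lin M' (f z))) -> intertwines (ecomp f g) M'.
Proof.
move=> gB h w c; rewrite /ecomp ev_lin gB !ev_lin.
by apply: eq_ev => z; rewrite -ev_lin h ev_lin.
Qed.
End UniversalProperty.

(** * H_R is a bialgebra *)

Section Bialgebra.
Variable K : fieldType.
Implicit Types (b : forest -> forest -> K) (c : dual K).
Local Notation D := (Delta K).
Local Notation e := (eps K).

Lemma Delta_mul b u w : ev2 b (D (fmul u w)) = ev2 b (vmul2 (D u) (D w)).
Proof.
have fmul2C : commutative fmul2 by move=> p q; rewrite /fmul2 fmulC [fmul p.2 _]fmulC.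
have fmul2A : associative fmul2 by move=> p q r; rewrite /fmul2 /= !fmulA.
have fmul21 : left_id (F0, F0) fmul2 by case=> p q; rewrite /fmul2 /= !fmul0f.
have DeltaE z : D z = gprod fmul2 (F0, F0) (DeltaT K) (fval z) by [].
rewrite !DeltaE; apply: etrans (gprod_perm fmul2C fmul2A fmul21 _ _ (fval_fmul u w)) _.
exact: (gprod_cat fmul2A fmul21).
Qed.
Lemma Delta_F0 : D F0 = vone2 K. Proof. by []. Qed.

Lemma DeltaT_node s :
  DeltaT K (RNode s) = (1, (Bp (mkF s), F0)) ::
    [seq (p.1, (p.2.1, Bp p.2.2)) | p <- foldr (fun t acc => vmul2 (DeltaT K t) acc) (vone2 K) s].
Proof. by rewrite /=; congr (_ :: map _ _); elim: s => //= t s ->. Qed.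

Lemma Delta_Bp b w : ev2 b (D (Bp w)) = b (Bp w) F0 + ev2 (fun p q => b p (Bp q)) (D w).
Proof.
rewrite /Delta fval_Bp /= ev2_vmul2 -/(DeltaT K (RNode (fval w))) DeltaT_node.
rewrite ev2_cons mkF_forest /= mul1r ev2_vone2 !fmulf0; congr (_ + _).
rewrite /ev2 /gev big_map; apply: eq_bigr => p _ /=.
by rewrite big_cons big_nil addr0 mul1r !fmulf0.
Qed.

Lemma eps_F0 : e F0 = 1. Proof. by rewrite /eps eqxx. Qed.
Lemma eps_Bp w : e (Bp w) = 0.
Proof. by rewrite /eps; case: eqP => // h; move: (congr1 fsize h); rewrite fsize_Bp. Qed.
Lemma eps_fmul u w : e (fmul u w) = e u * e w.
Proof.
rewrite /eps; case: (u =P F0) => [->|nu]; first by rewrite fmul0f mul1r.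
rewrite mul0r; case: eqP => // h; case: nu; apply: fsize0.
by move: (congr1 fsize h); rewrite fsize_fmul fsize_F0 => /eqP; rewrite addn_eq0 => /andP[/eqP].
Qed.

Lemma counit_r w c : ev2 (fun p q => c p * e q) (D w) = c w.
Proof.
elim/forest_ind: w c => [|ch r IHc IHr] c.
  by rewrite Delta_F0 ev2_vone2 eps_F0 mulr1.
rewrite Delta_mul ev2_vmul2.
transitivity (ev2 (fun u1 u2 => c (fmul u1 r) * e u2) (D (Bp ch))).
  apply: eq_ev2 => u1 u2; rewrite -(IHr (fun z => c (fmul u1 z) * e u2)).
  by apply: eq_ev2 => v1 v2; rewrite eps_fmul mulrA.
rewrite Delta_Bp eps_F0 mulr1 (eq_ev2 (b' := fun _ _ => 0)) ?ev2_0 ?addr0 // => p q.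
by rewrite eps_Bp mulr0.
Qed.
Lemma counit_l w c : ev2 (fun p q => e p * c q) (D w) = c w.
Proof.
elim/forest_ind: w c => [|ch r IHc IHr] c.
  by rewrite Delta_F0 ev2_vone2 eps_F0 mul1r.
rewrite Delta_mul ev2_vmul2.
transitivity (ev2 (fun u1 u2 => e u1 * c (fmul u2 r)) (D (Bp ch))).
  apply: eq_ev2 => u1 u2; rewrite -(IHr (fun z => c (fmul u2 z))) -ev2_scale.
  by apply: eq_ev2 => v1 v2; rewrite eps_fmul mulrA.
by rewrite Delta_Bp eps_Bp mul0r add0r (IHc (fun q => c (fmul (Bp q) r))).
Qed.

Definition graded_at w := forall b,
  ev2 b (D w) = ev2 (fun p q => if (fsize p + fsize q == fsize w)%N then b p q else 0) (D w).

Lemma graded_at_mul u v : graded_at u -> graded_at v -> graded_at (fmul u v).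
Proof.
move=> Hu Hv.
have G b : ev2 b (D (fmul u v)) = ev2 (fun u1 u2 => if (fsize u1 + fsize u2 == fsize u)%N then
    ev2 (fun v1 v2 => if (fsize v1 + fsize v2 == fsize v)%N then
           b (fmul u1 v1) (fmul u2 v2) else 0) (D v) else 0) (D u).
  rewrite Delta_mul ev2_vmul2 Hu; apply: eq_ev2 => u1 u2.
  by case: (_ == _) => //; rewrite Hv.
move=> b; rewrite !G; apply: eq_ev2 => u1 u2; case: eqP => // /= h1.
apply: eq_ev2 => v1 v2; case: eqP => // /= h2.
by rewrite !fsize_fmul -h1 -h2 addnACA eqxx.
Qed.

Lemma Delta_graded w : graded_at w.
Proof.
elim/forest_ind: w => [|ch r IHc IHr]; first by move=> b; rewrite Delta_F0 !ev2_vone2.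
apply: graded_at_mul => // b; rewrite !Delta_Bp fsize_F0 addn0 eqxx; congr (_ + _).
rewrite (IHc (fun p q => b p (Bp q))) (IHc (fun p q => if _ then _ else _)).
by apply: eq_ev2 => p q; rewrite !fsize_Bp addnS eqSS; case: (_ == _).
Qed.

Definition coassoc_at w := forall t : forest -> forest -> forest -> K,
  ev2 (fun x y => ev2 (fun x1 x2 => t x1 x2 y) (D x)) (D w) =
  ev2 (fun x y => ev2 (fun y1 y2 => t x y1 y2) (D y)) (D w).

Lemma coassoc_at_mul u v : coassoc_at u -> coassoc_at v -> coassoc_at (fmul u v).
Proof.
move=> Hu Hv t; rewrite !Delta_mul !ev2_vmul2.
transitivity (ev2 (fun u1 u2 => ev2 (fun s1 s2 => ev2 (fun v1 v2 =>
    ev2 (fun q1 q2 => t (fmul s1 q1) (fmul s2 q2) (fmul u2 v2)) (D v1)) (D v)) (D u1)) (D u)).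
  apply: eq_ev2 => u1 u2; rewrite ev2_exch; apply: eq_ev2 => v1 v2.
  by rewrite Delta_mul ev2_vmul2.
transitivity (ev2 (fun u1 u2 => ev2 (fun s1 s2 => ev2 (fun v1 v2 =>
    ev2 (fun z1 z2 => t (fmul s1 v1) (fmul s2 z1) (fmul u2 z2)) (D v2)) (D v)) (D u1)) (D u)).
  by apply: eq_ev2 => u1 u2; apply: eq_ev2 => s1 s2; rewrite Hv.
rewrite (Hu (fun s1 s2 u2 => ev2 (fun v1 v2 =>
    ev2 (fun z1 z2 => t (fmul s1 v1) (fmul s2 z1) (fmul u2 z2)) (D v2)) (D v))).
apply: eq_ev2 => u1 u2; rewrite ev2_exch; apply: eq_ev2 => v1 v2.
by rewrite Delta_mul ev2_vmul2.
Qed.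

Lemma coassoc_at_Bp ch : coassoc_at ch -> coassoc_at (Bp ch).
Proof.
move=> Hc t; rewrite Delta_Bp Delta_Bp [in RHS]Delta_Bp Delta_F0 ev2_vone2 -!addrA.
congr (_ + _); rewrite [RHS](eq_ev2 (b' := fun p q =>
  t p (Bp q) F0 + ev2 (fun y1 y2 => t p y1 (Bp y2)) (D q))); last by move=> p q; rewrite Delta_Bp.
by rewrite ev2_add (Hc (fun x1 x2 y => t x1 x2 (Bp y))).
Qed.

Lemma coassoc w : coassoc_at w.
Proof.
elim/forest_ind: w => [|ch r IHc IHr]; first by move=> t; rewrite !(Delta_F0, ev2_vone2).
exact: coassoc_at_mul (coassoc_at_Bp IHc) IHr.
Qed.
End Bialgebra.

(** * Maps built from 1-cocycles are bialgebra morphisms *)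

Section CocycleMorphisms.
Variable K : fieldType.
Implicit Types (b : forest -> forest -> K) (a c : dual K).
Local Notation D := (Delta K).
Local Notation e := (eps K).

Definition cocycle (M : endo K) := forall v b,
  ev (fun z => ev2 b (D z)) (M v) =
  ev (fun z => b z F0) (M v) + ev2 (fun x y => ev (b x) (M y)) (D v).

Definition comult_at (f : endo K) w := forall b,
  ev (fun z => ev2 b (D z)) (f w) =
  ev2 (fun x y => ev (fun x' => ev (fun y' => b x' y') (f y)) (f x)) (D w).

Variables (f M : endo K).
Hypotheses (f_mul : multiplicative f) (f_B : intertwines f M).

Lemma comult_at_Bp w : cocycle M -> comult_at f w -> comult_at f (Bp w).
Proof.
move=> cM IH b; rewrite f_B ev_lin.
rewrite (eq_ev (c := fun v => ev (fun z => b z F0) (M v) +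
                              ev2 (fun x y => ev (b x) (M y)) (D v))); last by move=> v; apply: cM.
rewrite ev_add -ev_lin -f_B IH Delta_Bp; congr (_ + _).
  by apply: eq_ev => x'; rewrite f_mul.1.
by apply: eq_ev2 => x y; apply: eq_ev => x'; rewrite f_B ev_lin.
Qed.

Lemma comult_at_mul u v : comult_at f u -> comult_at f v -> comult_at f (fmul u v).
Proof.
move=> Hu Hv b; rewrite f_mul.2 ev_vmul.
transitivity (ev (fun s => ev2 (fun s1 s2 => ev2 (fun x y => ev (fun x' => ev (fun y' =>
   b (fmul s1 x') (fmul s2 y')) (f y)) (f x)) (D v)) (D s)) (f u)).
  apply: eq_ev => s; transitivity (ev (fun t => ev2 (fun s1 s2 =>
      ev2 (fun t1 t2 => b (fmul s1 t1) (fmul s2 t2)) (D t)) (D s)) (f v)).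
    by apply: eq_ev => t; rewrite Delta_mul ev2_vmul2.
  rewrite -(ev_ev2_exch (fun s1 s2 t => ev2 (fun t1 t2 => b (fmul s1 t1) (fmul s2 t2)) (D t))).
  by apply: eq_ev2 => s1 s2; exact: (Hv (fun t1 t2 => b (fmul s1 t1) (fmul s2 t2))).
rewrite Hu Delta_mul ev2_vmul2; apply: eq_ev2 => u1 u2.
transitivity (ev2 (fun v1 v2 => ev (fun p1 => ev (fun p2 => ev (fun q1 => ev (fun q2 =>
   b (fmul p1 q1) (fmul p2 q2)) (f v2)) (f v1)) (f u2)) (f u1)) (D v)).
  apply: eq_trans (esym (ev_ev2_exch (fun v1 v2 p1 => ev (fun p2 => ev (fun q1 => ev (fun q2 =>
     b (fmul p1 q1) (fmul p2 q2)) (f v2)) (f v1)) (f u2)) (D v) (f u1))).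
  apply: eq_ev => p1; exact: (esym (ev_ev2_exch (fun v1 v2 p2 => ev (fun q1 => ev (fun q2 =>
     b (fmul p1 q1) (fmul p2 q2)) (f v2)) (f v1)) (D v) (f u2))).
apply: eq_ev2 => v1 v2; rewrite f_mul.2 ev_vmul; apply: eq_ev => p1.
by rewrite ev_exch; apply: eq_ev => q1; rewrite f_mul.2 ev_vmul.
Qed.

Lemma comult_of_cocycle : cocycle M -> forall w, comult_at f w.
Proof.
move=> cM; elim/forest_ind => [|ch r IHc IHr].
  by move=> b; rewrite f_mul.1 Delta_F0 !ev2_vone2 /= f_mul.1 f_mul.1.
exact: comult_at_mul (comult_at_Bp cM IHc) IHr.
Qed.

Lemma counit_of_cocycle : (forall v, ev e (M v) = 0) -> forall w, ev e (f w) = e w.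
Proof.
move=> hM; elim/forest_ind => [|ch r IHc IHr]; first by rewrite f_mul.1.
rewrite f_mul.2 ev_vmul (eq_ev (c := fun u => e u * e r)).
  by rewrite ev_scaler f_B ev_lin (eq_ev (c := fun _ => 0)) ?ev0 ?eps_fmul ?eps_Bp ?mul0r.
by move=> u; rewrite (eq_ev (c := fun z => e u * e z)) ?ev_scale ?IHr // => z; rewrite eps_fmul.
Qed.
End CocycleMorphisms.

Section Theta.
Variable K : fieldType.
Implicit Types (b : forest -> forest -> K) (a c : dual K).
Local Notation D := (Delta K).
Local Notation e := (eps K).

Definition Mth a : endo K := eadd (eBp K) (delta a).

Lemma ev_Mth c a w :
  ev c (Mth a w) = c (Bp w) + (ev2 (fun p q => c p * a q) (D w) - a w * c F0).
Proof. by rewrite ev_cat ev_fbasis ev_delta. Qed.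

(* B_+ is a 1-cocycle and delta a is a coboundary, so M_a is a 1-cocycle. *)
Lemma cocycle_Mth a : cocycle (Mth a).
Proof.
move=> v b; rewrite !ev_Mth Delta_Bp Delta_F0 ev2_vone2.
have E1 : ev2 (fun p q => ev2 b (D p) * a q) (D v) =
          ev2 (fun x y => ev2 (fun y1 y2 => b x y1 * a y2) (D y)) (D v).
  rewrite -(coassoc v (fun x1 x2 y => b x1 x2 * a y)); apply: eq_ev2 => p q.
  by rewrite /ev2 -gev_scaler.
have E2 : ev2 (fun x y => ev (b x) (Mth a y)) (D v) =
   ev2 (fun x y => b x (Bp y)) (D v) + ev2 (fun x y => ev2 (fun y1 y2 => b x y1 * a y2) (D y)) (D v)
   - ev2 (fun x y => b x F0 * a y) (D v).
  by rewrite -ev2_add -ev2_sub; apply: eq_ev2 => x y; rewrite ev_Mth addrA mulrC.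
by rewrite E1 E2; ring.
Qed.

Lemma eps_Mth a v : ev e (Mth a v) = 0.
Proof. by rewrite ev_Mth eps_Bp add0r (counit_l v a) eps_F0 mulr1 subrr. Qed.

Lemma theta_multiplicative a : multiplicative (theta a).
Proof. exact: phi_multiplicative. Qed.
Lemma theta_intertwines a : intertwines (theta a) (Mth a).
Proof. exact: phi_intertwines. Qed.
Lemma theta_comult a w : comult_at (theta a) w.
Proof.
exact: comult_of_cocycle (theta_multiplicative a) (theta_intertwines a) (@cocycle_Mth a) w.
Qed.
Lemma theta_counit a w : ev e (theta a w) = e w.
Proof.
exact: counit_of_cocycle (theta_multiplicative a) (theta_intertwines a) (@eps_Mth a) w.
Qed.
End Theta.

(** * Part (1): theta_a is the identity plus terms of lower degree *)

Section Degree.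
Variable K : fieldType.
Implicit Types (b : forest -> forest -> K) (a c : dual K).
Local Notation D := (Delta K).

Lemma ev2_Delta_vanish b z :
  (forall p q, (fsize p + fsize q)%N = fsize z -> b p q = 0) -> ev2 b (D z) = 0.
Proof.
move=> h; rewrite Delta_graded (eq_ev2 (b' := fun _ _ => 0)) ?ev2_0 // => p q.
by case: eqP => // /h.
Qed.

Lemma ev_Mth_low a c z : (forall u, (fsize u <= fsize z)%N -> c u = 0) ->
  ev c (Mth a z) = c (Bp z).
Proof.
move=> h; rewrite ev_Mth ev2_Delta_vanish; first by rewrite (h F0) ?mulr0 ?subrr ?addr0.
by move=> p q e; rewrite h ?mul0r // -e leq_addr.
Qed.

Lemma theta_low a w c : (forall u, (fsize u < fsize w)%N -> c u = 0) -> ev c (theta a w) = c w.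
Proof.
elim/forest_ind: w c => [|ch r IHc IHr] c h; first exact: ev_vone.
have hB : forall c', (forall u, (fsize u < fsize (Bp ch))%N -> c' u = 0) ->
    ev c' (theta a (Bp ch)) = c' (Bp ch).
  move=> c' h'; rewrite theta_intertwines ev_lin IHc.
    by rewrite ev_Mth_low // => u hu; apply: h'; rewrite fsize_Bp ltnS.
  move=> z hz; rewrite ev_Mth_low; first by apply: h'; rewrite !fsize_Bp ltnS.
  by move=> u hu; apply: h'; rewrite fsize_Bp ltnS (leq_trans hu (ltnW hz)).
rewrite (theta_multiplicative a).2 ev_vmul hB.
  by rewrite IHr // => t ht; apply: h; rewrite !fsize_fmul ltn_add2l.
move=> s hs; rewrite IHr => [|t ht]; apply: h; rewrite !fsize_fmul; first by rewrite ltn_add2r.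
by move: hs ht; lia.
Qed.

Lemma theta_unitriangular a w u :
  (fsize w <= fsize u)%N -> coef (theta a w) u = coef (fbasis K w) u.
Proof.
have coefE (v : vec K) : coef v u = ev (fun x => (x == u)%:R) v by exact: gcoefE.
move=> h; rewrite !coefE ev_fbasis theta_low // => u' hu; case: eqP => // e.
by move: hu; rewrite e ltnNge h.
Qed.
End Degree.

(** * Inverse and composition laws for theta *)

Section ThetaGroup.
Variable K : fieldType.
Implicit Types (a c d : dual K) (f g : endo K).
Local Notation D := (Delta K).

Definition eeqv f g := forall w c, ev c (f w) = ev c (g w).

Lemma eeqvP f g : eeq f g <-> eeqv f g.
Proof. by split=> h w; [move=> c; apply: (proj1 (veqP _ _) (h w)) | apply/veqP => c; apply: h]. Qed.

Lemma eeqv_trans f g h : eeqv f g -> eeqv g h -> eeqv f h.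
Proof. by move=> h1 h2 w c; rewrite h1 h2. Qed.
Lemma eeqv_sym f g : eeqv f g -> eeqv g f.
Proof. by move=> h w c; rewrite h. Qed.
Lemma ecomp_eeqv f f' g g' : eeqv f f' -> eeqv g g' -> eeqv (ecomp f g) (ecomp f' g').
Proof. by move=> hf hg w c; rewrite /ecomp !ev_lin hg; apply: eq_ev => z; rewrite hf. Qed.
Lemma ecompA f g h : eeqv (ecomp f (ecomp g h)) (ecomp (ecomp f g) h).
Proof. by move=> w c; rewrite /ecomp !ev_lin; apply: eq_ev => z; rewrite ev_lin. Qed.
Lemma lin_eadd f g v c : ev c (lin (eadd f g) v) = ev c (lin f v) + ev c (lin g v).
Proof. by rewrite !ev_lin -ev_add; apply: eq_ev => z; rewrite ev_cat. Qed.

Lemma delta_opp a c v : ev c (delta (dopp a) v) = - ev c (delta a v).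
Proof.
rewrite !ev_delta (eq_ev2 (b' := fun p q => - (c p * a q))) ?ev2_opp /dopp; first by ring.
by move=> p q; rewrite mulrN.
Qed.
Lemma lin_delta_add a d v c :
  ev c (lin (delta (fun w => a w + d w)) v) = ev c (lin (delta a) v) + ev c (lin (delta d) v).
Proof.
rewrite !ev_lin -ev_add; apply: eq_ev => z.
rewrite !ev_delta (eq_ev2 (b' := fun p q => c p * a q + c p * d q)) ?ev2_add.
  by rewrite mulrDl; ring.
by move=> p q; rewrite mulrDr.
Qed.
Lemma delta_ext a d v c : a =1 d -> ev c (delta a v) = ev c (delta d v).
Proof.
by move=> h; rewrite !ev_delta h (eq_ev2 (b' := fun p q => c p * d q)) // => p q; rewrite h.
Qed.

Lemma delta_morph f gm : multiplicative f -> (forall w, comult_at f w) ->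
  forall v c, ev c (lin (delta gm) (f v)) = ev c (lin f (delta (dcomp gm f) v)).
Proof.
move=> [f0 _] cm v c; rewrite !ev_lin.
rewrite (eq_ev (c := fun z => ev2 (fun p q => c p * gm q) (D z) - c F0 * gm z)); last first.
  by move=> z; rewrite ev_delta mulrC.
rewrite ev_sub ev_scale cm ev_delta f0 /dcomp; congr (_ - _); last by rewrite mulrC.
by apply: eq_ev2 => x y; rewrite -ev_scaler; apply: eq_ev => x'; rewrite -ev_scale.
Qed.

Lemma delta_theta a gm v c :
  ev c (lin (delta gm) (theta a v)) = ev c (lin (theta a) (delta (dcomp gm (theta a)) v)).
Proof. exact: delta_morph (theta_multiplicative a) (theta_comult a) v c. Qed.

Lemma theta_Bp a z c : ev c (theta a (Bp z)) =
  ev c (lin (eBp K) (theta a z)) + ev c (lin (delta a) (theta a z)).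
Proof. by rewrite theta_intertwines -lin_eadd. Qed.
Lemma lin_Mth f a z c : ev c (lin f (Mth a z)) = ev c (f (Bp z)) + ev c (lin f (delta a z)).
Proof. by rewrite !ev_lin /Mth /eadd ev_cat ev_fbasis. Qed.

Lemma theta_delta_ginv a z c :
  ev c (lin (theta a) (delta (ginv a) z)) = - ev c (lin (delta a) (theta a z)).
Proof. by rewrite delta_theta !ev_lin -delta_opp. Qed.

Lemma theta_inv_r a : eeqv (ecomp (theta a) (theta (ginv a))) (eid K).
Proof.
apply: (intertwiner_unique (M := eBp K)).
- exact: multiplicative_comp (theta_multiplicative _) (theta_multiplicative _).
- exact: multiplicative_eid.
- apply: intertwines_comp (theta_intertwines _) _ => z c.
  by rewrite lin_Mth theta_Bp theta_delta_ginv addrK.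
- exact: intertwines_eid.
Qed.

Lemma ginv_ginv a : ginv (ginv a) = a.
Proof.
apply: functional_extensionality => w; rewrite /ginv /dopp /dcomp ev_opp opprK.
by rewrite -ev_lin (theta_inv_r a w a) /eid ev_fbasis.
Qed.

Lemma theta_inv_l a : eeqv (ecomp (theta (ginv a)) (theta a)) (eid K).
Proof. by have := theta_inv_r (ginv a); rewrite ginv_ginv. Qed.

Lemma dcomp_theta_inv a d : dcomp (dcomp d (theta (ginv a))) (theta a) =1 d.
Proof. by move=> w; rewrite /dcomp -ev_lin (theta_inv_l a w d) /eid ev_fbasis. Qed.

Lemma theta_comp a d : eeqv (ecomp (theta a) (theta d)) (theta (bullet a d)).
Proof.
apply: (intertwiner_unique (M := Mth (bullet a d))).
- exact: multiplicative_comp (theta_multiplicative _) (theta_multiplicative _).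
- exact: theta_multiplicative.
- apply: intertwines_comp (theta_intertwines _) _ => z c.
  rewrite lin_Mth theta_Bp /Mth lin_eadd /bullet lin_delta_add -addrA; congr (_ + (_ + _)).
  by rewrite delta_theta !ev_lin; apply: delta_ext => y; rewrite dcomp_theta_inv.
- exact: theta_intertwines.
Qed.

Lemma theta0 : eeqv (theta (dzero K)) (eid K).
Proof.
apply: (intertwiner_unique (M := eBp K)).
- exact: theta_multiplicative.
- exact: multiplicative_eid.
- move=> w c; rewrite theta_Bp.
  have -> : ev c (lin (delta (dzero K)) (theta (dzero K) w)) = 0; last by rewrite addr0.
  rewrite ev_lin (eq_ev (c := fun _ => 0)) ?ev0 // => z.
  rewrite ev_delta /dzero mul0r subr0 (eq_ev2 (b' := fun _ _ => 0)) ?ev2_0 // => p q.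
  by rewrite mulr0.
- exact: intertwines_eid.
Qed.
End ThetaGroup.

(** * Part (2): theta_a is a Hopf algebra automorphism *)

Section Antipode.
Variable K : fieldType.
Implicit Types (a c : dual K) (f S T : endo K).
Local Notation D := (Delta K).
Local Notation e := (eps K).

Definition left_inverse f T := forall w c,
  ev2 (fun x y => ev (fun x' => ev (fun y' => c (fmul x' y')) (f y)) (T x)) (D w) = e w * c F0.

(* Left convolution inverses of a unital algebra morphism are unique: argue by
   induction on degree, isolating the term (w, 1) of Delta w. *)
Lemma left_inverse_unique f T1 T2 : multiplicative f ->
  left_inverse f T1 -> left_inverse f T2 -> eeqv T1 T2.
Proof.
move=> [f0 _] h1 h2 w.
suff S n z : (fsize z < n)%N -> forall c, ev c (T1 z) = ev c (T2 z) by exact: (S _ w (ltnSn _)).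
elim: n z => [|n IHn] z // hz c.
pose B T x y := ev (fun x' => ev (fun y' => c (fmul x' y')) (f y)) (T x).
have E0 : ev2 (fun x y => B T1 x y - B T2 x y) (D z) = 0 by rewrite ev2_sub h1 h2 subrr.
pose hh x := if fsize x == fsize z then B T1 x F0 - B T2 x F0 else 0.
have E1 : ev2 (fun x y => B T1 x y - B T2 x y) (D z) = ev2 (fun x y => hh x * e y) (D z).
  rewrite Delta_graded [RHS]Delta_graded; apply: eq_ev2 => x y; rewrite /hh /eps.
  case: eqP => // exy; case: (fsize x =P fsize z) => [ex|nx].
    have -> : y = F0 by apply: fsize0; move: exy; rewrite ex; lia.
    by rewrite eqxx mulr1.
  rewrite mul0r; apply/eqP; rewrite subr_eq0; apply/eqP.
  by apply: IHn; move: hz exy nx; lia.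
have fF0 x' : ev (fun y' => c (fmul x' y')) (f F0) = c x' by rewrite f0 fmulf0.
move: E0; rewrite E1 (counit_r z hh) /hh eqxx /B !(eq_ev _ fF0) => /eqP.
by rewrite subr_eq0 => /eqP.
Qed.

Lemma antipode_ev S w c : is_antipode S ->
  ev2 (fun u v => ev (fun x' => c (fmul x' v)) (S u)) (D w) = e w * c F0.
Proof.
move=> /(_ w) [/veqP H _]; have := H c.
rewrite ev_vmulT ev2_tmap ev_vscale ev_vone => <-.
by apply: eq_ev2 => u v; apply: eq_ev => x'; rewrite /eid ev_fbasis.
Qed.

Lemma left_inverse_fS f S : multiplicative f -> is_antipode S -> left_inverse f (ecomp f S).
Proof.
move=> [f0 fm] hS w c.
rewrite (eq_ev2 (b' := fun u v => ev (fun x' => ev c (f (fmul x' v))) (S u))); last first.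
  by move=> x y; rewrite /ecomp ev_lin; apply: eq_ev => s; rewrite fm ev_vmul.
by rewrite (antipode_ev w (fun z => ev c (f z)) hS) f0.
Qed.

Lemma left_inverse_Sf f S : (forall w, comult_at f w) -> (forall w, ev e (f w) = e w) ->
  is_antipode S -> left_inverse f (ecomp S f).
Proof.
move=> cm ce hS w c.
pose b u v := ev (fun x' => c (fmul x' v)) (S u).
transitivity (ev (fun z => ev2 b (D z)) (f w)).
  rewrite cm; apply: eq_ev2 => x y; rewrite /ecomp ev_lin; apply: eq_ev => u.
  by rewrite /b ev_exch.
by rewrite (eq_ev _ (fun z => antipode_ev z c hS)) ev_scaler ce.
Qed.

Lemma theta_antipode a S : is_antipode S -> eeq (ecomp (theta a) S) (ecomp S (theta a)).
Proof.
move=> hS; apply/eeqvP; apply: left_inverse_unique (theta_multiplicative a) _ _.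
  exact: left_inverse_fS (theta_multiplicative a) hS.
exact: left_inverse_Sf (theta_comult a) (theta_counit a) hS.
Qed.

Lemma theta_hopf_aut a : hopf_aut (theta a).
Proof.
split; last first.
  by exists (theta (ginv a)); split; apply/eeqvP; [exact: theta_inv_r | exact: theta_inv_l].
split=> [|w|S]; last exact: theta_antipode.
- by split=> [|u v]; [move=> u | apply/veqP => c; exact: (theta_multiplicative a).2].
- split; last exact: theta_counit.
  by apply/veq2P => b; rewrite ev2_Delta_lin theta_comult ev2_tmap.
Qed.
End Antipode.

(** * Part (3): injectivity of delta and of theta *)

Definition dot : forest := Bp F0.
Definition isolated (w : forest) : nat := count (fun t => t == RNode [::]) (fval w).

Lemma isolated_fmul u v : isolated (fmul u v) = (isolated u + isolated v)%N.
Proof. by rewrite /isolated (permP (fval_fmul u v)) count_cat. Qed.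
Lemma isolated_Bp c : isolated (Bp c) = (c == F0).
Proof.
rewrite /isolated fval_Bp /= addn0; case: eqP => [[] h|h]; case: eqP => // e.
  by case: e; apply: forest0.
by case: h; rewrite e.
Qed.
Lemma isolated_dot : isolated dot = 1%N. Proof. by rewrite /dot isolated_Bp eqxx. Qed.
Lemma fsize_dot : fsize dot = 1%N. Proof. by rewrite /dot fsize_Bp. Qed.
Lemma isolated_le w : (isolated w <= fsize w)%N.
Proof.
rewrite /isolated /fsize; elim: (fval w) => //= t s IH.
by apply: leq_add => //; case: t => cs /=; case: eqP.
Qed.

Lemma dot_factor w : (0 < isolated w)%N -> exists r, w = fmul dot r.
Proof.
rewrite /isolated -has_count => /hasP[t tw /eqP et]; subst t.
exists (mkF (rem (RNode [::]) (fval w))); apply: forest_eq.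
rewrite (permPr (fval_fmul _ _)) fval_Bp /= (permPl (perm_to_rem tw)) /=.
rewrite perm_cons perm_sym (permPl (fval_mkF _)) map_id_in //.
by move=> t /mem_rem/canon_in.
Qed.

Lemma fsize1 w : fsize w = 1%N -> w = dot.
Proof.
move=> h; apply: forest_eq; rewrite /dot fval_Bp /=.
have tpos t : (0 < Defs.tsize t)%N by case: t.
move: h; rewrite /fsize; case: (fval w) => [|[cs] [|t' s]] //=; last by move: (tpos t'); lia.
by rewrite addn0 => -[]; case: cs => [|t cs] //=; move: (tpos t); lia.
Qed.
Lemma dotE w : (w == dot) = (fsize w == 1%N).
Proof. by apply/eqP/eqP => [->|/fsize1 //]; rewrite fsize_dot. Qed.
Lemma F0E w : (w == F0) = (fsize w == 0%N).
Proof. by apply/eqP/eqP => [->|/fsize0 //]. Qed.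

Section Injectivity.
Variable K : fieldType.
Implicit Types (b : forest -> forest -> K) (a c d k : dual K).
Local Notation D := (Delta K).
Local Notation e := (eps K).

Definition ell k w := ev2 (fun x y => (x == dot)%:R * k y) (D w).

Lemma ell_delta k w : ell k w = ev (fun x => (x == dot)%:R) (delta k w).
Proof. by rewrite ev_delta dotE fsize_F0 /= mulr0 subr0. Qed.

Lemma dot_fmul u v : ((fmul u v == dot)%:R : K) = (u == dot)%:R * e v + e u * (v == dot)%:R.
Proof.
rewrite /eps !dotE !F0E fsize_fmul.
by case: (fsize u) => [|[|n]]; case: (fsize v) => [|[|m]] //=;
  rewrite ?mulr0 ?mul0r ?addr0 ?add0r ?mulr1.
Qed.

Lemma ell_mul k u v :
  ell k (fmul u v) = ell (fun y => k (fmul y v)) u + ell (fun y => k (fmul u y)) v.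
Proof.
rewrite /ell Delta_mul ev2_vmul2.
rewrite (eq_ev2 (b' := fun u1 u2 =>
    (u1 == dot)%:R * ev2 (fun v1 v2 => e v1 * k (fmul u2 v2)) (D v) +
    e u1 * ev2 (fun v1 v2 => (v1 == dot)%:R * k (fmul u2 v2)) (D v))); last first.
  move=> u1 u2; rewrite -!ev2_scale -ev2_add; apply: eq_ev2 => v1 v2.
  by rewrite dot_fmul; ring.
rewrite ev2_add; congr (_ + _).
  by apply: eq_ev2 => u1 u2; rewrite (counit_l v (fun z => k (fmul u2 z))).
exact: (counit_l u (fun z => ev2 (fun v1 v2 => (v1 == dot)%:R * k (fmul z v2)) (D v))).
Qed.

Lemma ell_Bp k ch : ell k (Bp ch) = (Bp ch == dot)%:R * k F0 + ell (fun y => k (Bp y)) ch.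
Proof. by rewrite /ell Delta_Bp. Qed.
Lemma ell_F0 k : ell k F0 = 0.
Proof. by rewrite /ell Delta_F0 ev2_vone2 dotE fsize_F0 mul0r. Qed.
Lemma ell0 k w : k =1 (fun _ => 0) -> ell k w = 0.
Proof.
by move=> h; rewrite /ell (eq_ev2 (b' := fun _ _ => 0)) ?ev2_0 // => p q; rewrite h mulr0.
Qed.

(* The terms dot (x) y of Delta w come from cutting one leaf off w.  Cutting
   one of the isolated(w) one-node trees of w = dot v leaves y = v; cutting a
   leaf of a larger tree leaves y with at least isolated(w) one-node trees. *)
Lemma ell_leaf w k v : (forall y, (isolated w <= isolated y)%N -> k y = 0) ->
  w = fmul dot v -> ell k w = (isolated w)%:R * k v.
Proof.
elim/forest_ind: w k v => [|ch r IHc IHr] k v hk ew.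
  by move: (congr1 fsize ew); rewrite fsize_fmul fsize_dot.
rewrite ell_mul ell_Bp.
have [ech|nch] := eqVneq ch F0.
  subst ch; rewrite -/dot eqxx mul1r /= fmul0f ell_F0 addr0.
  have evr : v = r by apply: (fmulI (u := dot)); rewrite -ew.
  subst v; rewrite isolated_fmul isolated_dot; case: (posnP (isolated r)) => [i0|ip].
    rewrite i0 ell0 ?addr0 ?mul1r // => y; apply: hk.
    by rewrite isolated_fmul isolated_fmul isolated_dot i0.
  have [r' er'] := dot_factor ip.
  rewrite (IHr (fun y => k (fmul dot y)) r') //; last first.
    by move=> y hy; apply: hk; rewrite !isolated_fmul isolated_dot leq_add2l.
  by rewrite -er' natrD mulrDl mul1r.
have ic : isolated (Bp ch) = 0%N by rewrite isolated_Bp (negbTE nch).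
have -> : (Bp ch == dot) = false by apply/eqP => /Bp_inj /eqP; rewrite (negbTE nch).
rewrite mul0r add0r ell0 ?add0r; last first.
  by move=> y; apply: hk; rewrite !isolated_fmul ic isolated_Bp leq_add2r leq0n.
have ip : (0 < isolated r)%N.
  by move: (congr1 isolated ew); rewrite !isolated_fmul ic isolated_dot add0n => ->.
have [r' er'] := dot_factor ip.
have -> : v = fmul (Bp ch) r'.
  by apply: (fmulI (u := dot)); rewrite -ew er' fmulA [fmul (Bp ch) dot]fmulC -fmulA.
rewrite (IHr (fun y => k (fmul (Bp ch) y)) r') //; last first.
  by move=> y hy; apply: hk; rewrite !isolated_fmul ic.
by rewrite isolated_fmul ic add0n.
Qed.

Hypothesis charK : [pchar K] =i pred0.

Lemma natf_neq0 n : (n.+1%:R : K) != 0.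
Proof.
apply/negP => h; have [p hp] := natf0_pchar (ltn0Sn n) h.
by move: hp; rewrite charK.
Qed.

(* delta is injective: if delta a = delta d then a = d, by induction on
   |v| - isolated(v), reading a(v) - d(v) off ell (a - d) (dot v) = 0. *)
Lemma delta_inj a d : (forall v c, ev c (delta a v) = ev c (delta d v)) -> a =1 d.
Proof.
move=> H.
have ell0_ad w : ell (fun y => a y - d y) w = 0.
  rewrite /ell (eq_ev2 (b' := fun x y => (x == dot)%:R * a y - (x == dot)%:R * d y)).
    by rewrite ev2_sub -/(ell a w) -/(ell d w) !ell_delta H subrr.
  by move=> p q; rewrite mulrBr.
suff S n v : (fsize v - isolated v < n)%N -> a v = d v by move=> v; exact: (S _ v (ltnSn _)).
elim: n v => [|n IHn] v //= hv.
pose k y := if fsize y == fsize v then a y - d y else 0.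
have hk y : (isolated (fmul dot v) <= isolated y)%N -> k y = 0.
  rewrite /k isolated_fmul isolated_dot; case: eqP => // ey hy.
  apply/eqP; rewrite subr_eq0; apply/eqP; apply: IHn.
  by have := isolated_le y; have := isolated_le v; move: hv hy ey; lia.
have := ell_leaf hk (erefl (fmul dot v)).
have -> : ell k (fmul dot v) = 0.
  rewrite -(ell0_ad (fmul dot v)) /ell Delta_graded [RHS]Delta_graded; apply: eq_ev2 => p q.
  case: eqP => // ep; rewrite /k; have [pdot|] := eqVneq p dot; last by rewrite !mul0r.
  by move: ep; rewrite pdot fsize_fmul fsize_dot add1n => -[->]; rewrite eqxx.
rewrite isolated_fmul isolated_dot add1n => /esym/eqP; rewrite mulf_eq0 (negbTE (natf_neq0 _)) /=.
by rewrite /k eqxx subr_eq0 => /eqP.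
Qed.

(* theta_a = theta_d forces delta a = delta d, by comparing theta on B_+ w. *)
Lemma theta_delta_inj a d : eeqv (theta a) (theta d) ->
  forall v c, ev c (delta a v) = ev c (delta d v).
Proof.
move=> h.
have H1 w c : ev c (lin (delta a) (theta a w)) = ev c (lin (delta d) (theta a w)).
  have := h (Bp w) c; rewrite !theta_Bp (lin_eq (eBp K) (h w)) (lin_eq (delta d) (h w)).
  by move/addrI.
move=> v c.
have E x : ev c (delta x v) = ev (fun y => ev c (lin (delta x) (theta a y))) (theta (ginv a) v).
  transitivity (ev c (lin (delta x) (ecomp (theta a) (theta (ginv a)) v))).
    by rewrite (lin_eq _ (theta_inv_r a v)) /eid ev_lin ev_fbasis.
  by rewrite /ecomp !ev_lin; apply: eq_ev => y; rewrite ev_lin.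
by rewrite !E; apply: eq_ev => y; apply: H1.
Qed.

Lemma theta_inj a d : eeqv (theta a) (theta d) -> a =1 d.
Proof. by move=> h; apply: delta_inj; exact: theta_delta_inj. Qed.
End Injectivity.

Section GroupLaws.
Variable K : fieldType.
Hypothesis charK : [pchar K] =i pred0.
Implicit Types (a b c : dual K).

(* Associativity transports from composition of the theta's, by injectivity. *)
Lemma bullet_assoc a b c : bullet (bullet a b) c =1 bullet a (bullet b c).
Proof.
apply: (theta_inj charK); apply: eeqv_trans (eeqv_sym (theta_comp _ _)) _.
apply: eeqv_trans (ecomp_eeqv (eeqv_sym (theta_comp a b)) (fun _ _ => erefl)) _.
apply: eeqv_trans (eeqv_sym (ecompA _ _ _)) _.
apply: eeqv_trans (ecomp_eeqv (fun _ _ => erefl) (theta_comp b c)) _.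
exact: theta_comp.
Qed.

Lemma ginv0 : ginv (dzero K) = dzero K.
Proof. by apply: functional_extensionality => w; rewrite /ginv /dopp /dcomp /dzero ev0 oppr0. Qed.

Lemma bullet0a a : bullet (dzero K) a =1 a.
Proof. by move=> w; rewrite /bullet /dcomp ginv0 theta0 /eid ev_fbasis add0r. Qed.
Lemma bulleta0 a : bullet a (dzero K) =1 a.
Proof. by move=> w; rewrite /bullet /dcomp /dzero ev0 addr0. Qed.

Lemma bullet_ginv_r a : bullet a (ginv a) =1 dzero K.
Proof.
move=> w; rewrite /bullet {2}/ginv /dopp /dcomp ev_opp -ev_lin.
by rewrite (theta_inv_r a w a) /eid ev_fbasis subrr.
Qed.
Lemma bullet_ginv_l a : bullet (ginv a) a =1 dzero K.
Proof. by move=> w; rewrite /bullet ginv_ginv /ginv /dopp /dcomp addNr. Qed.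
End GroupLaws.

Theorem mainTheorem15 (K : fieldType) (charK : [pchar K] =i pred0) :
  (* (1) theta_alpha(w) - w lies in degrees < |w| *)
  (forall (a : dual K) (w u : forest),
      (fsize w <= fsize u)%N -> coef (theta a w) u = coef (fbasis K w) u)
  (* (2) Hopf automorphism, inverse, composition law *)
  /\ (forall a : dual K,
        hopf_aut (theta a)
        /\ eeq (ecomp (theta a) (theta (ginv a))) (eid K)
        /\ eeq (ecomp (theta (ginv a)) (theta a)) (eid K))
  /\ (forall a b : dual K, eeq (ecomp (theta a) (theta b)) (theta (bullet a b)))
  (* (3) injectivity and group structure *)
  /\ (forall a b : dual K, eeq (delta a) (delta b) -> a =1 b)
  /\ (forall a b : dual K, eeq (theta a) (theta b) -> a =1 b)
  /\ (forall a b c : dual K, bullet (bullet a b) c =1 bullet a (bullet b c))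
  /\ (forall a : dual K, bullet (dzero K) a =1 a /\ bullet a (dzero K) =1 a)
  /\ (forall a : dual K, bullet a (ginv a) =1 dzero K /\ bullet (ginv a) a =1 dzero K).
Proof.
split; first exact: theta_unitriangular.
split.
  move=> a; split; first exact: theta_hopf_aut.
  by split; apply/eeqvP; [exact: theta_inv_r | exact: theta_inv_l].
split; first by move=> a b; apply/eeqvP; exact: theta_comp.
split; first by move=> a b /eeqvP h; apply: (delta_inj charK).
split; first by move=> a b /eeqvP; exact: theta_inj.
split; first exact: bullet_assoc.
split; first by move=> a; split; [exact: bullet0a | exact: bulleta0].
by move=> a; split; [exact: bullet_ginv_r | exact: bullet_ginv_l].
Qed.
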